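(* Let $r$ be an odd prime, $p=2r$, and $\mu_i=(-1)^iA_p^{i(i+2)}$. For distinct $i,j\in\{0,1,\dots,r-2\}$, up to a unit of $\mathcal{O}_p$: (1) $\mu_i-\mu_j\sim 1$ if $i\not\equiv j\pmod 2$ and $(j-i)(i+j+2)\not\equiv0\pmod r$; (2) $\mu_i-\mu_j\sim\sqrt2$ if $i\not\equiv j\pmod 2$ and $(j-i)(i+j+2)\equiv0\pmod r$; (3) $\mu_i-\mu_j\sim 1+\alpha_p^4$ if $i\equiv j\pmod 2$.
   Context: $\alpha_p=e^{2\pi i/(4p)}$, $A_p=\alpha_p^2$, $\mathcal{O}_p=\mathbb{Z}[\alpha_p]$. $\mu_i$ is the eigenvalue of the twist map on the basis element $e_i$ of the Kauffman skein module of the solid torus, $0\le i\le d_p-1=r-2$. $a\sim b$ means $a/b$ is a unit of $\mathcal{O}_p$. *)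

From mathcomp Require Import all_boot all_order all_algebra all_field.
Set Implicit Arguments. Unset Strict Implicit. Unset Printing Implicit Defensive.
Import Order.TTheory GRing.Theory Num.Theory.
Local Open Scope ring_scope.

(* alpha_p = e^{2 pi i/(4p)}; with p = 2r this is e^{i pi/(4r)}, which is
   (4r).-root (-1) in algC (the n-th root of -1 of minimal nonnegative argument). *)
Definition alpha_p (p : nat) : algC := (2 * p)%N.-root (-1).
Definition A_p (p : nat) : algC := alpha_p p ^+ 2.

Definition in_Op (p : nat) (x : algC) : Prop :=
  exists q : {poly int}, x = (map_poly intr q).[alpha_p p].

Definition unit_Op (p : nat) (u : algC) : Prop :=
  in_Op p u /\ u != 0 /\ in_Op p u^-1.

Definition assoc_Op (p : nat) (a b : algC) : Prop :=
  b != 0 /\ unit_Op p (a / b).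

Definition mu (p i : nat) : algC := (-1) ^+ i * A_p p ^+ (i * (i + 2)).

From mathcomp Require Import all_boot all_order all_algebra all_field.
From mathcomp Require Import ring zify.
Set Implicit Arguments.
Unset Strict Implicit.
Unset Printing Implicit Defensive.
Import Order.TTheory GRing.Theory Num.Theory.
Local Open Scope ring_scope.

(* Since (-1)^i = (-1)^(i(i+2)), mu_i is the power b^(i(i+2)) of b = -A_p, a
   primitive 4r-th root of unity in O_p, so mu_i - mu_j is a unit times 1 - b^N
   with N = (i-j)(i+j+2), and everything depends on the order of b^N.  If N is
   odd and prime to r, then b^N has order 4r and 1 - b^N is a unit; if N is odd
   and r | N, then (b^N)^2 = -1 and (1 - b^N)/sqrt 2 is an 8th root of unity; if
   N is even, then 4 | N and b^N and -alpha_p^4 are both nontrivial r-th roots of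
   unity, and for such roots x, y the elements 1 - x and 1 - y are associates.
   The only analytic input is that alpha_p = (4r).-root (-1) is a primitive
   8r-th root of unity, i.e. not an 8th root of unity. *)

Lemma geometric_sum (R : fieldType) (x : R) n :
  x != 1 -> \sum_(t < n) x ^+ t = (1 - x ^+ n) / (1 - x).
Proof.
move=> x_neq1; have x1 : 1 - x != 0 by rewrite subr_eq0 eq_sym.
by rewrite -[1 - x ^+ n]opprB subrX1 -mulNr opprB mulrC mulKf.
Qed.

Lemma prime_prim_root (R : idomainType) q (x : R) :
  prime q -> x ^+ q = 1 -> x != 1 -> q.-primitive_root x.
Proof.
move=> q_pr xq x_neq1; have [m prim_m m_dvd] := prim_order_exists (prime_gt0 q_pr) xq.
case/primeP: q_pr => _ /(_ m m_dvd)/pred2P[m1|<- //].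
by move: (prim_expr_order prim_m); rewrite m1 expr1 => x1; rewrite x1 eqxx in x_neq1.
Qed.

Lemma prim_expr_half (R : idomainType) n (w : R) :
  (0 < n)%N -> (2 * n).-primitive_root w -> w ^+ n = -1.
Proof.
move=> n_gt0 prim_w; have /eqP := prim_expr_order prim_w.
rewrite mulnC exprM sqrf_eq1 => /orP[/eqP wn1 | /eqP //].
by move: (prim_order_dvd prim_w n); rewrite wn1 eqxx gtnNdvd //; lia.
Qed.

Lemma Re_le_rootC n (x y : algC) :
  (0 < n)%N -> x \is Num.real -> y ^+ n = x -> 'Re y <= 'Re (n.-root x).
Proof.
move=> n_gt0 xR yn; have [|/ltW Im_le0] := real_ge0P (Creal_Im y).
  exact: rootC_Re_max.
rewrite -Re_conj; apply: rootC_Re_max => //.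
  by rewrite -rmorphXn /= yn conj_Creal.
by rewrite Im_conj oppr_ge0.
Qed.

Lemma sqr_Re_le_rootCN1 n (y : algC) : (0 < n)%N -> ~~ odd n ->
  y ^+ n = -1 -> 'Re y ^+ 2 <= 'Re (n.-root (-1)) ^+ 2.
Proof.
move=> n_gt0 n_even yn; have le_y := Re_le_rootC n_gt0 (rpredN1 _) yn.
have le_Ny : 'Re (- y) <= 'Re (n.-root (-1)).
  by apply: Re_le_rootC (rpredN1 _) _; rewrite // exprNn -signr_odd (negbTE n_even) mul1r.
have Re_y : `|'Re y| <= 'Re (n.-root (-1)).
  by apply/real_ler_normlP; rewrite ?Creal_Re // -raddfN.
by rewrite -real_normK ?Creal_Re // ler_sqr ?nnegrE //; exact: le_trans Re_y.
Qed.

Lemma normC_rootN1 n (y : algC) : (0 < n)%N -> y ^+ n = -1 -> `|y| = 1.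
Proof.
move=> n_gt0 yn; apply/eqP.
by rewrite -(pexpr_eq1 n_gt0) ?normr_ge0 // -normrX yn normrN1.
Qed.

Lemma conjC_normC1 (y : algC) : `|y| = 1 -> y^* = y^-1.
Proof. by move=> y1; rewrite invC_norm y1 expr1n invr1 mul1r. Qed.

Lemma sqr_Re_normC1 (y : algC) : `|y| = 1 -> 4 * 'Re y ^+ 2 = y ^+ 2 + 2 + (y ^+ 2)^*.
Proof.
move=> y1; have yy : y * y^* = 1 by rewrite -normCK y1 expr1n.
have two_neq0 : 2 != 0 :> algC by rewrite pnatr_eq0.
transitivity ((y + y^*) ^+ 2); first by rewrite ReE; field.
by rewrite sqrrD yy rmorphXn.
Qed.

Lemma sqr_Re_normC1_eq2 (y : algC) : `|y| = 1 -> (4 * 'Re y ^+ 2 == 2) = (y ^+ 4 == -1).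
Proof.
move=> y1; have y_neq0 : y != 0 by rewrite -normr_eq0 y1 oner_eq0.
rewrite sqr_Re_normC1 // conjC_normC1 ?normrX ?y1 ?expr1n // -subr_eq0.
have -> : y ^+ 2 + 2 + (y ^+ 2)^-1 - 2 = (y ^+ 4 + 1) / y ^+ 2 by field.
by rewrite mulf_eq0 invr_eq0 expf_eq0 (negbTE y_neq0) andbF orbF addr_eq0.
Qed.

Lemma sum_sqr_Re_odd_expr n (w : algC) : (2 * n).-primitive_root w -> (2 < n)%N ->
  \sum_(k < n) (2 - 4 * 'Re (w ^+ (2 * k + 1)) ^+ 2) = 0.
Proof.
move=> prim_w n_gt2; have n_gt0 : (0 < n)%N by lia.
have w4_neq1 : w ^+ 4 != 1 by rewrite -(prim_order_dvd prim_w) gtnNdvd //; lia.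
have w4n : (w ^+ 4) ^+ n = 1.
  rewrite -exprM (_ : 4 * n = 2 * n * 2)%N; last by lia.
  by rewrite exprM (prim_expr_order prim_w) expr1n.
have sum_sqr : \sum_(k < n) (w ^+ (2 * k + 1)) ^+ 2 = 0.
  rewrite (eq_bigr (fun k : 'I_n => w ^+ 2 * (w ^+ 4) ^+ k)); last first.
    by move=> k _; rewrite -!exprM -exprD; congr (_ ^+ _); lia.
  by rewrite -mulr_sumr geometric_sum // w4n subrr mul0r mulr0.
have y1 k : `|w ^+ (2 * k + 1)| = 1.
  apply: (normC_rootN1 n_gt0).
  by rewrite exprAC (prim_expr_half n_gt0 prim_w) -signr_odd oddD oddM.
rewrite (eq_bigr (fun k : 'I_n => - ((w ^+ (2 * k + 1)) ^+ 2 + ((w ^+ (2 * k + 1)) ^+ 2)^*))).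
  by rewrite sumrN big_split /= -rmorph_sum sum_sqr rmorph0 addr0 oppr0.
by move=> k _; rewrite sqr_Re_normC1 //; ring.
Qed.

(* If the root of -1 of largest real part were an 8th root of unity, every root y
   of -1 would satisfy 4 Re(y)^2 <= 2; since these values average to 2, equality
   would hold for all of them, which fails for a primitive 8m-th root of unity. *)
Lemma rootCN1_expr8_neq1 m : odd m -> (1 < m)%N -> (4 * m).-root (-1 : algC) ^+ 8 != 1.
Proof.
move=> m_odd m_gt1; set n := (4 * m)%N; set a := n.-root (-1 : algC).
have n_gt0 : (0 < n)%N by rewrite /n; lia.
have an : a ^+ n = -1 := rootCK n_gt0 (-1).
apply/eqP => a8.
have a4 : a ^+ 4 = -1.
  rewrite -an; have -> : n = (4 + 8 * m./2)%N.
    by move: (odd_double_half m); rewrite m_odd -muln2 /n /=; lia.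
  by rewrite exprD exprM a8 expr1n mulr1.
have Re_a : 4 * 'Re a ^+ 2 = 2.
  by apply/eqP; rewrite sqr_Re_normC1_eq2 ?a4 // (normC_rootN1 n_gt0 an).
have [w prim_w] : {w : algC | (2 * n).-primitive_root w}.
  by apply: C_prim_root_exists; lia.
have terms_ge0 (k : 'I_n) : true -> 0 <= 2 - 4 * 'Re (w ^+ (2 * k + 1)) ^+ 2.
  move=> _; rewrite subr_ge0 -Re_a ler_pM2l ?ltr0n //; apply: sqr_Re_le_rootCN1 => //.
    by rewrite /n oddM.
  by rewrite exprAC (prim_expr_half n_gt0 prim_w) -signr_odd oddD oddM.
have n_gt2 : (2 < n)%N by rewrite /n; lia.
have := psumr_eq0P terms_ge0 (sum_sqr_Re_odd_expr prim_w n_gt2) (i := Ordinal n_gt0) isT.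
rewrite /= muln0 add0n expr1 => /eqP; rewrite subr_eq0 eq_sym sqr_Re_normC1_eq2.
  move=> /eqP w4; have /negP[] : ~~ (2 * n %| 8)%N by rewrite gtnNdvd // /n; lia.
  by rewrite (prim_order_dvd prim_w) (exprM w 4 2) w4 sqrrN expr1n.
exact: normC_rootN1 n_gt0 (prim_expr_half n_gt0 prim_w).
Qed.

Lemma prim_rootCN1 r : prime r -> odd r -> (8 * r).-primitive_root ((4 * r).-root (-1 : algC)).
Proof.
move=> r_pr r_odd; set a := _.-root _; have r_gt1 := prime_gt1 r_pr.
have a4r : a ^+ (4 * r) = -1 by apply: rootCK; lia.
have a8r : a ^+ (8 * r) = 1.
  by rewrite (_ : 8 * r = 4 * r * 2)%N; [rewrite exprM a4r sqrrN expr1n | lia].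
have [w prim_w] : {w : algC | (8 * r).-primitive_root w}.
  by apply: C_prim_root_exists; lia.
have [[k _] /= aE] := prim_rootP prim_w a8r.
rewrite aE prim_root_exp_coprime // coprimeMr (@coprime_pexpr 3 k 2) // coprimen2.
apply/andP; split.
  have : a ^+ (4 * r) != 1 by rewrite a4r eq_sym -addr_eq0 (_ : 1 + 1 = 2%:R) // pnatr_eq0.
  rewrite aE -exprM -(prim_order_dvd prim_w) (_ : 8 * r = 2 * (4 * r))%N; last by lia.
  by rewrite dvdn_pmul2r ?dvdn2 ?negbK //; lia.
rewrite coprime_sym prime_coprime //; apply: contra (rootCN1_expr8_neq1 r_odd r_gt1).
case/dvdnP=> t kE; rewrite -/a aE kE -exprM -(prim_order_dvd prim_w).
by apply/dvdnP; exists t; lia.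
Qed.

Section RingOp.
Variable p : nat.
Local Notation O := (in_Op p).
Local Notation U := (unit_Op p).

Lemma in_OpD x y : O x -> O y -> O (x + y).
Proof. by move=> [q1 ->] [q2 ->]; exists (q1 + q2); rewrite rmorphD hornerD. Qed.

Lemma in_OpM x y : O x -> O y -> O (x * y).
Proof. by move=> [q1 ->] [q2 ->]; exists (q1 * q2); rewrite rmorphM hornerM. Qed.

Lemma in_Op_int (n : int) : O n%:~R.
Proof. by exists n%:P; rewrite map_polyC hornerC. Qed.

Lemma in_OpN x : O x -> O (- x).
Proof. by move=> Ox; rewrite -mulN1r; apply: in_OpM => //; apply: (in_Op_int (-1)). Qed.

Lemma in_OpB1 x : O x -> O (1 - x).
Proof. by move=> Ox; apply: in_OpD; [exact: (in_Op_int 1) | exact: in_OpN]. Qed.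

Lemma in_OpX x n : O x -> O (x ^+ n).
Proof.
by move=> Ox; elim: n => [|n IH]; [exact: (in_Op_int 1) | rewrite exprS; exact: in_OpM].
Qed.

Lemma in_Op_sum n (F : 'I_n -> algC) : (forall t, O (F t)) -> O (\sum_(t < n) F t).
Proof. by move=> OF; apply: big_ind => //; [apply: (in_Op_int 0) | apply: in_OpD]. Qed.

Lemma in_Op_alpha : O (alpha_p p).
Proof. by exists 'X; rewrite map_polyX hornerX. Qed.

Lemma unit_Op_mul_eq1 u v : O u -> O v -> u * v = 1 -> U u.
Proof.
move=> Ou Ov uv; have u_neq0 : u != 0.
  by apply: contra_eq_neq uv => ->; rewrite mul0r eq_sym oner_eq0.
by split=> //; split=> //; rewrite -[u^-1]mulr1 -uv mulKf.
Qed.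

Lemma unit_OpM u v : U u -> U v -> U (u * v).
Proof.
move=> [Ou [u_neq0 Ou']] [Ov [v_neq0 Ov']].
by split; [exact: in_OpM | split; [rewrite mulf_neq0 | rewrite invfM; exact: in_OpM]].
Qed.

Lemma unit_OpMl u v : O u -> O v -> U (u * v) -> U u.
Proof.
move=> Ou Ov [_ [uv_neq0 Ouv']]; apply: (unit_Op_mul_eq1 Ou (in_OpM Ov Ouv')).
by rewrite mulrA divff.
Qed.

Lemma unit_Op_unity_root x n : (0 < n)%N -> O x -> x ^+ n = 1 -> U x.
Proof.
by move=> n_gt0 Ox xn; apply: (unit_Op_mul_eq1 Ox (in_OpX n.-1 Ox)); rewrite -exprS prednK.
Qed.

Lemma unit_OpN1 : U (-1).
Proof. by apply: (unit_Op_unity_root (n := 2)) (in_Op_int (-1)) _; rewrite // sqrrN expr1n. Qed.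

Lemma unit_OpN u : U u -> U (- u).
Proof. by move=> Uu; rewrite -mulN1r; exact: unit_OpM unit_OpN1 Uu. Qed.

Lemma assoc_Op_div a b : a != 0 -> b != 0 -> O (a / b) -> O (b / a) -> assoc_Op p a b.
Proof.
move=> a_neq0 b_neq0 Oab Oba; split=> //; apply: (unit_Op_mul_eq1 Oab Oba).
by rewrite mulrA divfK // divff.
Qed.

Lemma assoc_OpMl u a b : U u -> assoc_Op p a b -> assoc_Op p (u * a) b.
Proof. by move=> Uu [b_neq0 Uab]; split=> //; rewrite -mulrA; exact: unit_OpM. Qed.

Lemma assoc_Op1 a : U a -> assoc_Op p a 1.
Proof. by move=> Ua; split; [exact: oner_neq0 | rewrite divr1]. Qed.

(* Two nontrivial q-th roots of unity are powers of each other, so both quotients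
   of 1 - x and 1 - y are geometric sums. *)
Lemma assoc_Op_subr_prime_root q x y : prime q -> O x ->
  x ^+ q = 1 -> y ^+ q = 1 -> x != 1 -> y != 1 -> assoc_Op p (1 - y) (1 - x).
Proof.
move=> q_pr Ox xq yq x_neq1 y_neq1.
have [l xE] := prim_rootP (prime_prim_root q_pr yq y_neq1) xq.
have [k yE] := prim_rootP (prime_prim_root q_pr xq x_neq1) yq.
have Oy : O y by rewrite yE; exact: in_OpX.
apply: assoc_Op_div; rewrite ?subr_eq0 1?eq_sym //.
  by rewrite yE -geometric_sum //; apply: in_Op_sum => t; exact: in_OpX.
by rewrite [in X in X / _]xE -geometric_sum //; apply: in_Op_sum => t; exact: in_OpX.
Qed.

(* (1 - y)(1 + y) = 1 + eta = (1 - eta^2) / (1 - eta) for the q-th root of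
   unity eta = -y^2. *)
Lemma unit_Op_subr_root q y : prime q -> odd q -> O y ->
  y ^+ (2 * q) = -1 -> y ^+ 2 != -1 -> U (1 - y).
Proof.
move=> q_pr q_odd Oy y2q y2_neqN1; set eta := - y ^+ 2.
have etaq : eta ^+ q = 1 by rewrite exprNn -signr_odd q_odd -exprM y2q mulN1r opprK.
have eta_neq1 : eta != 1 by rewrite eqr_oppLR.
have eta2_neq1 : eta ^+ 2 != 1.
  rewrite sqrrN -exprM; apply: contraNneq y2_neqN1 => y4; apply/eqP; rewrite -y2q.
  have -> : (2 * q = 2 + 2 * 2 * q./2)%N.
    by move: (odd_double_half q); rewrite q_odd; lia.
  by rewrite exprD exprM y4 expr1n mulr1.
have Oeta : O eta by apply: in_OpN; exact: in_OpX.
have eta2q : (eta ^+ 2) ^+ q = 1 by rewrite exprAC etaq expr1n.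
have [eta1_neq0 Uquot] :=
  assoc_Op_subr_prime_root q_pr Oeta etaq eta2q eta_neq1 eta2_neq1.
have y2E : 1 - y ^+ 2 = (1 - eta ^+ 2) / (1 - eta).
  by apply: (mulIf eta1_neq0); rewrite divfK // /eta; ring.
apply: (@unit_OpMl _ (1 + y)); [exact: in_OpB1 | | by rewrite -subr_sqr expr1n y2E].
by apply: in_OpD; [exact: (in_Op_int 1)|].
Qed.

(* (1 - g)^2 = -2 g, so (1 - g) / sqrt 2 is an 8th root of unity, i.e. a power of w. *)
Lemma assoc_Op_subr_sqrt2 w g : 8.-primitive_root w -> O w -> O g ->
  g ^+ 2 = -1 -> assoc_Op p (1 - g) (sqrtC 2).
Proof.
move=> prim_w Ow Og g2.
have sqrt2_neq0 : sqrtC 2 != 0 :> algC by rewrite sqrtC_eq0 pnatr_eq0.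
set u := (1 - g) / sqrtC 2.
have u2 : u ^+ 2 = - g.
  have two_neq0 : 2 != 0 :> algC by rewrite pnatr_eq0.
  by rewrite expr_div_n sqrtCK; apply: (mulIf two_neq0); rewrite divfK // sqrrB g2; ring.
have u8 : u ^+ 8 = 1.
  by rewrite (exprM u 2 4) (exprM _ 2 2) u2 sqrrN g2 sqrrN expr1n.
have [k uE] := prim_rootP prim_w u8.
split=> //; apply: (unit_Op_unity_root (n := 8)) u8 => //.
by rewrite -/u uE; exact: in_OpX.
Qed.

End RingOp.

Lemma muE p i : mu p i = (- A_p p) ^+ (i * (i + 2)).
Proof.
rewrite /mu [in RHS]exprNn; congr (_ * _).
by rewrite -[in RHS]signr_odd oddM oddD /= addbF andbb signr_odd.
Qed.

Lemma mu_subr p i j : (j <= i)%N ->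
  mu p i - mu p j = - mu p j * (1 - (- A_p p) ^+ ((i - j) * (i + j + 2))).
Proof.
move=> le_ji; rewrite !muE mulNr mulrBr mulr1 -exprD opprB.
by congr (_ ^+ _ - _); nia.
Qed.

Section Alpha.
Variables (r : nat) (r_pr : prime r) (r_odd : odd r).
Local Notation p := (2 * r)%N.
Local Notation alpha := (alpha_p p).
Local Notation beta := (- A_p p).

Lemma prim_alpha : (8 * r).-primitive_root alpha.
Proof. by rewrite /alpha_p mulnA; exact: prim_rootCN1. Qed.

Lemma beta_expr2r : beta ^+ (2 * r) = -1.
Proof.
rewrite exprM sqrrN /A_p -!exprM /alpha_p.
by rewrite rootCK // !muln_gt0 (prime_gt0 r_pr).
Qed.

Lemma beta_expr4_eq1 k : (beta ^+ (4 * k) == 1) = (r %| k)%N.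
Proof.
rewrite (_ : 4 * k = 2 * (2 * k))%N; last by lia.
rewrite exprM sqrrN /A_p -!exprM -(prim_order_dvd prim_alpha).
by rewrite (_ : 2 * (2 * (2 * k)) = 8 * k)%N ?dvdn_pmul2l //; lia.
Qed.

Lemma beta_expr4r : beta ^+ (4 * r) = 1.
Proof. by apply/eqP; rewrite beta_expr4_eq1. Qed.

Lemma in_Op_beta : in_Op p beta.
Proof. by apply: in_OpN; apply: in_OpX; exact: in_Op_alpha. Qed.

Lemma unit_Op_mu i : unit_Op p (mu p i).
Proof.
rewrite muE; apply: (unit_Op_unity_root (n := 4 * r)).
  by rewrite muln_gt0 (prime_gt0 r_pr).
  by apply: in_OpX; exact: in_Op_beta.
by rewrite exprAC beta_expr4r expr1n.
Qed.

Lemma unit_Op_subr_beta N : odd N -> ~~ (r %| N)%N -> unit_Op p (1 - beta ^+ N).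
Proof.
move=> N_odd r_ndvd_N; apply: (unit_Op_subr_root r_pr r_odd).
- by apply: in_OpX; exact: in_Op_beta.
- by rewrite exprAC beta_expr2r -signr_odd N_odd.
apply: contra r_ndvd_N => /eqP betaN2; rewrite -beta_expr4_eq1 (mulnC 4%N N) exprM.
by rewrite (exprM _ 2%N 2%N) betaN2 sqrrN expr1n.
Qed.

Lemma assoc_Op_subr_beta_sqrt2 N : odd N -> (r %| N)%N ->
  assoc_Op p (1 - beta ^+ N) (sqrtC 2).
Proof.
move=> N_odd /dvdnP[t NE].
have prim_alpha_r : 8.-primitive_root (alpha ^+ r).
  by have := dvdn_prim_root prim_alpha (dvdn_mulr r (dvdnn 8)); rewrite mulKn.
apply: (assoc_Op_subr_sqrt2 prim_alpha_r); try by apply: in_OpX; exact: in_Op_alpha.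
  by apply: in_OpX; exact: in_Op_beta.
have t_odd : odd t by move: N_odd; rewrite NE oddM => /andP[].
rewrite -exprM NE (_ : t * r * 2 = 2 * r * t)%N; last by lia.
by rewrite exprM beta_expr2r -signr_odd t_odd.
Qed.

Lemma assoc_Op_subr_beta_alpha4 N : (4 %| N)%N -> ~~ (r %| N)%N ->
  assoc_Op p (1 - beta ^+ N) (1 + alpha ^+ 4).
Proof.
move=> /dvdnP[M NE] r_ndvd_N.
have -> : 1 + alpha ^+ 4 = 1 - (- beta ^+ 2) by rewrite opprK sqrrN /A_p -exprM.
apply: (assoc_Op_subr_prime_root r_pr).
- by apply: in_OpN; apply: in_OpX; exact: in_Op_beta.
- by rewrite exprNn -signr_odd r_odd -exprM beta_expr2r mulN1r opprK.
- rewrite NE -exprM (_ : M * 4 * r = 4 * r * M)%N; last by lia.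
  by rewrite exprM beta_expr4r expr1n.
- rewrite eqr_oppLR; apply/eqP => beta2.
  have := beta_expr4_eq1 1; rewrite muln1 (exprM _ 2%N 2%N) beta2 sqrrN expr1n eqxx.
  by rewrite dvdn1 => /esym/eqP r1; move: r_pr; rewrite r1.
rewrite NE (mulnC M 4%N) beta_expr4_eq1; apply: contra r_ndvd_N => r_dvd_M.
by rewrite NE dvdn_mulr.
Qed.

End Alpha.

Lemma odd_mu_exponent i j :
  (j <= i)%N -> odd ((i - j) * (i + j + 2)) = (odd i != odd j).
Proof.
move=> le_ji; rewrite oddM oddB // !oddD /= addbF andbb.
by case: (odd i) (odd j) => [] [].
Qed.

Lemma dvdz_mu_exponent r i j : (j <= i)%N ->
  (r%:Z %| (j%:Z - i%:Z) * (i + j + 2)%:Z)%Z = (r %| (i - j) * (i + j + 2))%N.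
Proof. by move=> le_ji; rewrite -opprB subzn // mulNr dvdzE abszN abszM. Qed.

Lemma even_mu_exponent r i j : prime r -> odd r -> (i <= r - 2)%N -> (j < i)%N ->
  odd i = odd j -> (4 %| (i - j) * (i + j + 2))%N && ~~ (r %| (i - j) * (i + j + 2))%N.
Proof.
move=> r_pr r_odd le_ir lt_ji odd_ij.
have d_even : (2 %| i - j)%N by rewrite dvdn2 oddB ?(ltnW lt_ji) // odd_ij addbb.
have s_even : (2 %| i + j + 2)%N by rewrite dvdn2 !oddD odd_ij addbb.
rewrite (dvdn_mul d_even s_even) Euclid_dvdM // gtnNdvd ?subn_gt0 //=; last by lia.
apply/negP => r_dvd_s; have : (2 * r %| i + j + 2)%N by rewrite Gauss_dvd ?coprime2n ?s_even.
by move/dvdn_leq; rewrite addn_gt0 orbT; lia.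
Qed.

Theorem lemma3p2 (r : nat) (hr : prime r) (hodd : odd r) (i j : nat)
  (hi : (i <= r - 2)%N) (hj : (j <= r - 2)%N) (hij : i != j) :
  let p := (2 * r)%N in
  let c := ((j%:Z - i%:Z) * (i + j + 2)%:Z)%R in
  [/\ (odd i != odd j) -> ~~ (r%:Z %| c)%Z ->
        assoc_Op p (mu p i - mu p j) 1,
      (odd i != odd j) -> (r%:Z %| c)%Z ->
        assoc_Op p (mu p i - mu p j) (sqrtC 2)
    & (odd i = odd j) ->
        assoc_Op p (mu p i - mu p j) (1 + alpha_p p ^+ 4)].
Proof.
move=> p c; rewrite {}/c.
wlog lt_ji : i j hi hj hij / (j < i)%N.
  move=> wlog_ji; have [lt_ij|lt_ji|eq_ij] := ltngtP i j; last first.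
  - by rewrite eq_ij eqxx in hij.
  - exact: wlog_ji.
  have [|h1 h2 h3] := wlog_ji j i hj hi _ lt_ij; first by rewrite eq_sym.
  have Emu : mu p i - mu p j = -1 * (mu p j - mu p i) by rewrite mulN1r opprB.
  have Ec : (r%:Z %| (i%:Z - j%:Z) * (j + i + 2)%:Z)%Z =
            (r%:Z %| (j%:Z - i%:Z) * (i + j + 2)%:Z)%Z.
    by rewrite (addnC j i) -opprB mulNr !dvdzE abszN.
  rewrite Emu; move: h1 h2 h3; rewrite Ec (eq_sym (odd j)) => h1 h2 h3.
  split=> [? ?|? ?|?]; apply: assoc_OpMl (unit_OpN1 p) _; [exact: h1 | exact: h2 |].
  exact/h3/esym.
have le_ji := ltnW lt_ji.
rewrite mu_subr // dvdz_mu_exponent // -odd_mu_exponent //.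
have Umu := unit_OpN (unit_Op_mu hr hodd j).
split=> [N_odd r_ndvd | N_odd r_dvd | odd_ij]; apply: assoc_OpMl Umu _.
- exact: assoc_Op1 (unit_Op_subr_beta hr hodd N_odd r_ndvd).
- exact: assoc_Op_subr_beta_sqrt2.
have /andP[dvd4 r_ndvd] := even_mu_exponent hr hodd hi lt_ji odd_ij.
exact: assoc_Op_subr_beta_alpha4.
Qed.
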